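(* Let $L\ge0$ and, for $n\ge1$, let $\mathbb H_n$ be maps from $\mathbb X$ to subsets of $\mathbb R^N$, each $L$-separable (with the same $L$). If $\mathbb H(\theta)=\mathrm{cl}\big(\bigcup_{n\ge1}\mathbb H_n(\theta)\big)$ for all $\theta\in\mathbb X$, then $\mathbb H$ is $L$-separable.
   Context: $\mathbb X:=[0,T]\times\mathbb R^d\times\mathbb R^{dN}$ with elements $\theta=(t,x,z)$. A set-valued map $\mathbb G$ from $\mathbb X$ to subsets of $\mathbb R^N$ is called $L$-separable if there exist functions $H^n:\mathbb X\to\mathbb R^N$, $n\ge1$, such that $\mathbb G(\theta)=\mathrm{cl}\{H^n(\theta):n\ge1\}$ for each $\theta\in\mathbb X$, and each $H^n$ is measurable in $(t,x)$ and uniformly Lipschitz continuous in $z$ with common Lipschitz constant $L$. *)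

From HB Require Import structures.
From mathcomp Require Import all_boot all_order all_algebra.
From mathcomp Require Import all_classical all_reals all_analysis.
Set Implicit Arguments. Unset Strict Implicit. Unset Printing Implicit Defensive.
Import Order.TTheory GRing.Theory Num.Theory.
Local Open Scope classical_set_scope.
Local Open Scope ring_scope.
Import numFieldNormedType.Exports.

(* Euclidean (Frobenius) norm on real matrices; row vectors 'rV_N model R^N,
   d x N matrices model R^{dN}. *)
Definition enorm {R : realType} {m n : nat} (A : 'M[R]_(m, n)) : R :=
  Num.sqrt (\sum_(i < m) \sum_(j < n) (A i j) ^+ 2).

Definition borel_set {T : topologicalType} (A : set T) : Prop :=
  <<s [set G : set T | open G] >> A.

(* A set-valued map on X = [0,T] x R^d x R^{dN}, with values subsets of R^N. *)
Definition setmap (R : realType) (d N : nat) :=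
  R -> 'rV[R]_d -> 'M[R]_(d, N) -> set 'rV[R]_N.

Definition L_separable {R : realType} {d N : nat} (T L : R)
    (G : setmap R d N) : Prop :=
  exists H : nat -> R -> 'rV[R]_d -> 'M[R]_(d, N) -> 'rV[R]_N,
    (forall t x z, 0 <= t <= T -> G t x z = @closure [the topologicalType of 'rV[R]_N] (range (fun n => H n t x z)))
    /\ (forall n (z : 'M[R]_(d, N)) (U : set 'rV[R]_N), open U ->
          borel_set ([set p : R * 'rV[R]_d | 0 <= p.1 <= T]
                     `&` [set p | U (H n p.1 p.2 z)]))
    /\ (forall n t x z z', 0 <= t <= T ->
          enorm (H n t x z - H n t x z') <= L * enorm (z - z')).

From HB Require Import structures.
From mathcomp Require Import all_boot all_order all_algebra.
From mathcomp Require Import all_classical all_reals all_analysis.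
Import Order.TTheory GRing.Theory Num.Theory.
Local Open Scope classical_set_scope.
Local Open Scope ring_scope.
Import numFieldNormedType.Exports.

(* Merge the families (H_n^k)_k representing the H_n into one family indexed
   by the pairs (n, k), enumerated through nat.  Measurability in (t, x) and
   the Lipschitz bound in z are conditions on each member separately, and
   cl (U_n cl {H_n^k : k}) = cl {H_n^k : n, k}. *)

Lemma range_unpickle {T : Type} {I : countType} (i0 : I) (F : I -> T) :
  range (fun m => F (odflt i0 (unpickle m))) = range F.
Proof.
apply/seteqP; split=> _ [i _ <-]; first by exists (odflt i0 (unpickle i)).
by exists (pickle i) => //; rewrite pickleK.
Qed.

Lemma bigcup_range {I J T : Type} (F : I -> J -> T) :
  \bigcup_i range (F i) = range (fun p : I * J => F p.1 p.2).
Proof.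
apply/seteqP; split=> [_ [i _ [j _ <-]]|_ [[i j] _ <-]]; first by exists (i, j).
by exists i => //; exists j.
Qed.

Lemma closure_bigcup_closure (T : topologicalType) (I : Type) (A : I -> set T) :
  closure (\bigcup_i closure (A i)) = closure (\bigcup_i A i).
Proof.
apply/seteqP; split; last first.
  by apply: closureS => x [i _ Ax]; exists i => //; exact: subset_closure.
rewrite [X in _ `<=` X](proj1 (closure_id _) (@closed_closure _ _)).
by apply: closureS => x [i _]; apply: closureS; exact: bigcup_sup.
Qed.

Theorem lemma4p7 (R : realType) (d N : nat) (T L : R)
  (Hs : nat -> setmap R d N) (H : setmap R d N) :
  0 < T -> 0 <= L ->
  (forall n, L_separable T L (Hs n)) ->
  (forall t x z, 0 <= t <= T ->
     H t x z = @closure [the topologicalType of 'rV[R]_N] (\bigcup_n Hs n t x z)) ->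
  L_separable T L H.
Proof.
move=> _ _ Hs_sep H_closure.
have [F F_sep] := choice Hs_sep.
pose pair_of m := odflt (0, 0)%N (unpickle m).
exists (fun m => F (pair_of m).1 (pair_of m).2); split; [|split].
- move=> t x z t_in; rewrite H_closure //.
  have -> : \bigcup_n Hs n t x z = \bigcup_n closure (range (fun k => F n k t x z)).
    by apply: eq_bigcupr => n _; have [Hs_range _] := F_sep n; exact: Hs_range.
  rewrite closure_bigcup_closure bigcup_range.
  by congr closure; rewrite -(range_unpickle (0, 0)%N).
- by move=> m z U U_open; have [_ [meas _]] := F_sep (pair_of m).1; exact: meas.
- by move=> m t x z z' t_in; have [_ [_ lip]] := F_sep (pair_of m).1; exact: lip.
Qed.
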